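(* Let $n\ge 4$ and let $\mathcal{W}(n)=(Q,\Sigma,\delta,0,\{n-2\})$ with $Q=\{0,\dots,n-1\}$, where $\Sigma$ consists of the following letters: (1) $b_i$ for $1\le i\le n-3$, inducing the transformation $(0\to n-1)(i\to n-2)(n-2\to n-1)$; (2) one letter $c_i$ for every transformation of $Q$ that maps $0$ to $n-2$, maps $\{n-2,n-1\}$ to $n-1$ and maps $Q_M$ into $Q\setminus\{0,n-2\}$, other than the transformation $(0\to n-2)(Q_M\to n-1)(n-2\to n-1)$; (3) one letter $d_i$ for every transformation of $Q$ that maps $0$ to a state of $Q_M$, maps $Q_M$ into $\{n-2,n-1\}$ and maps $\{n-2,n-1\}$ to $n-1$, other than the transformations $(0\to q)(Q_M\to n-1)(n-2\to n-1)$ with $q\in Q_M$. Then the transition semigroup of $\mathcal{W}(n)$ is $\mathbf{W}^{\ge 6}_{\mathrm{bf}}(n)$.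
   Context: $Q_M=\{1,\dots,n-3\}$. Transformations act on the right, $q(st)=(qs)t$; the transition semigroup of a DFA is the semigroup of transformations of its state set induced by nonempty words. For $S\subseteq Q$ and $q\in Q$, $(S\to q)$ denotes the transformation mapping every state of $S$ to $q$ and fixing all other states; $(p\to q)$ means $(\{p\}\to q)$; juxtaposition denotes composition. Let $\mathbf{B}_{\mathrm{bf}}(n)$ be the set of all transformations $t$ of $Q$ with $0\notin Qt$, $(n-1)t=n-1$, $(n-2)t=n-1$, and for all $j\ge1$, either $0t^j=n-1$ or $0t^j\ne qt^j$ for all $0<q<n-1$. Then $\mathbf{W}^{\ge 6}_{\mathrm{bf}}(n)=\{t\in\mathbf{B}_{\mathrm{bf}}(n)\mid 0t\in\{n-2,n-1\}$, or $0t\in Q_M$ and $qt\in\{n-2,n-1\}$ for all $q\in Q_M\}$. *)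

From mathcomp Require Import all_boot.
Set Implicit Arguments. Unset Strict Implicit. Unset Printing Implicit Defensive.

Definition inQM (n : nat) (k : nat) : bool := (1 <= k) && (k <= n - 3).

(* Transformations act on the right: q(st) = (qs)t, so a word a1...ak acts by
   applying a1 first, then a2, ..., then ak. *)
Definition word_trans (T : finType) (S : Type) (delta : S -> T -> T) (w : seq S)
  : {ffun T -> T} := [ffun q => foldl (fun p a => delta a p) q w].

Definition transition_semigroup (T : finType) (S : Type) (delta : S -> T -> T)
  (t : {ffun T -> T}) : Prop :=
  exists w : seq S, w <> [::] /\ word_trans delta w = t.

Record DFA (n : nat) := MkDFA {
  alphabet : finType;
  delta : alphabet -> 'I_n -> 'I_n;
  init : nat;
  final : pred nat
}.

Definition dfa_transition_semigroup n (A : DFA n) : {ffun 'I_n -> 'I_n} -> Prop :=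
  transition_semigroup (@delta n A).

Definition is_b (n : nat) (t : {ffun 'I_n -> 'I_n}) : bool :=
  [exists i : 'I_n, inQM n (val i) &&
    [forall q : 'I_n, val (t q) ==
      (if val q == 0 then n - 1
       else if val q == val i then n - 2
       else if val q == n - 2 then n - 1
       else val q)]].

Definition is_c (n : nat) (t : {ffun 'I_n -> 'I_n}) : bool :=
  [forall q : 'I_n, (val q == 0) ==> (val (t q) == n - 2)] &&
  [forall q : 'I_n, ((val q == n - 2) || (val q == n - 1)) ==> (val (t q) == n - 1)] &&
  [forall q : 'I_n, inQM n (val q) ==> ((val (t q) != 0) && (val (t q) != n - 2))] &&
  ~~ [forall q : 'I_n, val (t q) ==
      (if val q == 0 then n - 2
       else if inQM n (val q) then n - 1
       else if val q == n - 2 then n - 1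
       else val q)].

Definition is_d (n : nat) (t : {ffun 'I_n -> 'I_n}) : bool :=
  [forall q : 'I_n, (val q == 0) ==> inQM n (val (t q))] &&
  [forall q : 'I_n, inQM n (val q) ==> ((val (t q) == n - 2) || (val (t q) == n - 1))] &&
  [forall q : 'I_n, ((val q == n - 2) || (val q == n - 1)) ==> (val (t q) == n - 1)] &&
  ~~ [exists p : 'I_n, inQM n (val p) &&
      [forall q : 'I_n, val (t q) ==
        (if val q == 0 then val p
         else if inQM n (val q) then n - 1
         else if val q == n - 2 then n - 1
         else val q)]].

Definition W_letter (n : nat) (t : {ffun 'I_n -> 'I_n}) : bool :=
  [|| is_b t, is_c t | is_d t].

(* Alphabet of W(n): one letter per transformation listed above (the three
   families induce pairwise distinct transformations). *)
Definition W_alphabet (n : nat) : finType :=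
  {t : {ffun 'I_n -> 'I_n} | W_letter t}.

Definition W_delta (n : nat) (a : W_alphabet n) (q : 'I_n) : 'I_n := (val a) q.

Definition W_dfa (n : nat) : DFA n :=
  @MkDFA n (W_alphabet n) (@W_delta n) 0 (pred1 (n - 2)).

Definition B_bf (n : nat) (t : {ffun 'I_n -> 'I_n}) : Prop :=
  (forall q : 'I_n, val (t q) <> 0) /\
  (forall q : 'I_n, val q = n - 1 -> val (t q) = n - 1) /\
  (forall q : 'I_n, val q = n - 2 -> val (t q) = n - 1) /\
  (forall j : nat, 1 <= j -> forall z : 'I_n, val z = 0 ->
     val (iter j t z) = n - 1 \/
     (forall q : 'I_n, 0 < val q < n - 1 -> iter j t z <> iter j t q)).

Definition W_bf6 (n : nat) (t : {ffun 'I_n -> 'I_n}) : Prop :=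
  B_bf t /\
  forall z : 'I_n, val z = 0 ->
    (val (t z) = n - 2 \/ val (t z) = n - 1) \/
    (inQM n (val (t z)) /\
     forall q : 'I_n, inQM n (val q) -> val (t q) = n - 2 \/ val (t q) = n - 1).

From mathcomp Require Import all_boot zify.
Set Implicit Arguments. Unset Strict Implicit. Unset Printing Implicit Defensive.

(* Call t W-shaped if it never reaches 0, sends n-2 and n-1 to n-1, and either
   0t = n-1, or 0t = n-2 and Q_M t avoids n-2, or 0t lies in Q_M and Q_M t lies
   in {n-2, n-1}.  Since then 0t^3 = n-1, the iterate condition of B_bf(n) only
   bites at j = 1, and W^{>=6}_bf(n) is exactly the set of W-shaped maps.  Every
   letter of W(n) is W-shaped and W-shaped maps are closed under composition.
   Conversely a W-shaped t is a c- or d-letter itself, or a product of two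
   letters: a c-letter followed by b_i, where i is a state of Q_M missed by Q_M t
   (by counting, it exists as soon as some state of Q_M goes to n-2); a c- or
   d-letter followed by the c-letter fixing Q_M; or a product of b_1 and the
   d-letter (0 -> 1)(1 -> n-2)(Q_M \ {1} -> n-1) in either order. *)

Section TransitionSemigroup.

Variables (T : finType) (S : Type) (delta : S -> T -> T).

Lemma word_trans_cat u v :
  word_trans delta (u ++ v) = [ffun q => word_trans delta v (word_trans delta u q)].
Proof. by apply/ffunP => q; rewrite !ffunE foldl_cat. Qed.

Lemma word_trans1 a : word_trans delta [:: a] = [ffun q => delta a q].
Proof. by apply/ffunP => q; rewrite !ffunE. Qed.

Lemma transition_semigroup_letter a : transition_semigroup delta [ffun q => delta a q].
Proof. by exists [:: a]; rewrite word_trans1. Qed.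

Lemma transition_semigroup_comp s t :
  transition_semigroup delta s -> transition_semigroup delta t ->
  transition_semigroup delta [ffun q => t (s q)].
Proof.
move=> [u [u_nil <-]] [v [_ <-]]; exists (u ++ v).
by split; [case: u u_nil | exact: word_trans_cat].
Qed.

Lemma transition_semigroup_ind (Inv : {ffun T -> T} -> Prop) :
  (forall a, Inv [ffun q => delta a q]) ->
  (forall s t, Inv s -> Inv t -> Inv [ffun q => t (s q)]) ->
  forall t, transition_semigroup delta t -> Inv t.
Proof.
move=> Inv_letter Inv_comp t [w [+ <-]].
elim: w => // a [_ _ | b w IH _]; first by rewrite word_trans1.
rewrite -cat1s word_trans_cat; apply: Inv_comp; last exact: IH.
by rewrite word_trans1.
Qed.

End TransitionSemigroup.

Lemma exists_notin_imset (T : finType) (f : T -> T) (A : {set T}) x :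
  x \in A -> f x \notin A -> exists2 y, y \in A & y \notin f @: A.
Proof.
move=> Ax fxA; case: (boolP (A \subset f @: A)) => [sAfA | /subsetPn [y]]; last by exists y.
have: A \proper f @: A by apply/properP; split => //; exists (f x) => //; exact: imset_f.
by move/proper_card; rewrite ltnNge leq_imset_card.
Qed.

(* lia sees the value of a state only through [nat_of_ord], not through [val]. *)
Ltac ord_val := repeat match goal with
  | H : context [@isSub.val_subdef _ _ _ _ ?x] |- _ =>
      change (@isSub.val_subdef _ _ _ _ x) with (nat_of_ord x) in H
  | |- context [@isSub.val_subdef _ _ _ _ ?x] =>
      change (@isSub.val_subdef _ _ _ _ x) with (nat_of_ord x)
  end.

Ltac state_lia := unfold inQM in *; ord_val; lia.

Ltac case_ifs := repeat match goal with
  | |- context [if ?b then _ else _] => let E := fresh "E" in case E : b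
  | H : context [if ?b then _ else _] |- _ => let E := fresh "E" in case E : b in H
  end.

Lemma state_cases n (q : 'I_n) :
  [\/ val q = 0, inQM n (val q), val q = n - 2 | val q = n - 1].
Proof.
have : [|| val q == 0, inQM n (val q), val q == n - 2 | val q == n - 1].
  by have := ltn_ord q; state_lia.
by case/or4P=> [/eqP | | /eqP | /eqP]; [constructor 1 | constructor 2 | constructor 3 | constructor 4].
Qed.

Definition W_shape n (t : {ffun 'I_n -> 'I_n}) : Prop :=
  [/\ forall q, val (t q) <> 0,
      forall q, val q = n - 2 \/ val q = n - 1 -> val (t q) = n - 1 &
      forall z, val z = 0 ->
        [\/ val (t z) = n - 1,
            val (t z) = n - 2 /\ (forall q, inQM n (val q) -> val (t q) <> n - 2)
          | inQM n (val (t z)) /\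
            (forall q, inQM n (val q) -> val (t q) = n - 2 \/ val (t q) = n - 1)]].

Section Shape.

Variable n : nat.
Hypothesis n_ge2 : 2 <= n.
Local Notation sink q := (val q = n - 2 \/ val q = n - 1).
Implicit Types s t : {ffun 'I_n -> 'I_n}.

Lemma iter_sink t :
  (forall q, sink q -> val (t q) = n - 1) -> forall j x, sink x -> val (iter j.+1 t x) = n - 1.
Proof. by move=> t_sink j x x_sink; elim: j => [|j IH] /=; apply: t_sink; [|right]. Qed.

Lemma W_shape_W_bf6 t : W_shape t -> W_bf6 t.
Proof.
move=> [t0 t_sink t_init]; split; last first.
  by move=> z /t_init [h | [h _] | ?]; [left; right | left; left | right].
split=> //; split; first by move=> q ?; apply: t_sink; right.
split; first by move=> q ?; apply: t_sink; left.
have inner q : 0 < val q < n - 1 -> inQM n (val q) \/ val q = n - 2 by state_lia.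
move=> [//|[|[|j]]] _ z /t_init.
- case=> [h | [h tM] | [h tM]]; first by left.
  + right=> q /inner [qM | qn2] /(congr1 val) /= e; first by apply: (tM q qM); state_lia.
    by move: (t_sink q (or_introl qn2)); state_lia.
  + right=> q /inner [qM | qn2] /(congr1 val) /= e.
      by move: (tM q qM) h; state_lia.
    by move: (t_sink q (or_introl qn2)) h; state_lia.
- case=> [h | [h _] | [h tM]]; try by left; apply: t_sink; auto.
  have [e | e] := tM _ h; last by left.
  right=> q /inner qMn2 /(congr1 val); rewrite /= e.
  have tq_sink : sink (t q).
    by case: qMn2 => [/tM | /(fun h => t_sink q (or_introl h))]; auto.
  by move: (t_sink _ tq_sink); state_lia.
- case=> [h | [h _] | [h tM]]; left; rewrite iterSr iterSr; apply: iter_sink => //;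
    [right; apply: t_sink | right; apply: t_sink | exact: tM]; auto.
Qed.

Lemma W_bf6_W_shape t : W_bf6 t -> W_shape t.
Proof.
move=> [[t0 [tn1 [tn2 t_iter]]] t_init].
split=> //; first by move=> q [/tn2 | /tn1].
move=> z z0; case: (t_init z z0) => [[h | h] | [h tM]]; last by constructor 3.
- constructor 2; split=> // q qM e.
  case: (t_iter 1 isT z z0) => /= [|distinct]; first by state_lia.
  by apply: (distinct q); [state_lia | apply: val_inj; rewrite /= e h].
- by constructor 1.
Qed.

Lemma W_letter_shape t : W_letter t -> W_shape t.
Proof.
case/or3P.
- case/existsP=> i /andP [iM /forallP /(_ _) /eqP tE].
  split=> [q | q | z z0]; last constructor 1;
    [have := tE q | have := tE q | have := tE z]; case_ifs; state_lia.
- rewrite /is_c -!andbA => /and4P [/forallP t_init /forallP t_sink /forallP tM _].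
  split=> [q | q | z z0].
  + by have := t_init q; have := t_sink q; have := tM q; have := ltn_ord q;
      have := ltn_ord (t q); rewrite /implb; case_ifs; state_lia.
  + by have := t_sink q; rewrite /implb; case_ifs; state_lia.
  + constructor 2; split; first by have := t_init z; rewrite /implb; case_ifs; state_lia.
    by move=> q qM; have := tM q; rewrite qM /= => /andP [_ /eqP].
- rewrite /is_d -!andbA => /and4P [/forallP t_init /forallP tM /forallP t_sink _].
  split=> [q | q | z z0].
  + by have := t_init q; have := t_sink q; have := tM q; have := ltn_ord q;
      have := ltn_ord (t q); rewrite /implb; case_ifs; state_lia.
  + by have := t_sink q; rewrite /implb; case_ifs; state_lia.
  + constructor 3; split; first by have := t_init z; rewrite /implb; case_ifs; state_lia.
    by move=> q qM; have := tM q; rewrite qM /= => /orP [] /eqP; auto.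
Qed.

Lemma W_shape_comp s t : W_shape s -> W_shape t -> W_shape [ffun q => t (s q)].
Proof.
move=> [_ s_sink s_init] [t0 t_sink _].
split=> [q | q qs | z /s_init]; rewrite ?ffunE; first exact: t0.
  by apply: t_sink; right; apply: s_sink.
case=> [h | [h sM] | [h sM]]; try by constructor 1; apply: t_sink; auto.
case: (state_cases (t (s z))) => [/t0 // | e | e | e].
- by constructor 3; split=> // q /sM /t_sink; rewrite ffunE; right.
- by constructor 2; split=> // q /sM /t_sink; rewrite ffunE; state_lia.
- by constructor 1.
Qed.

Lemma W_letter_semigroup t : W_letter t -> dfa_transition_semigroup (W_dfa n) t.
Proof.
move=> Wt; have := transition_semigroup_letter (@W_delta n) (exist _ t Wt).
by rewrite /W_delta ffunK.
Qed.

Lemma W_semigroup_shape t : dfa_transition_semigroup (W_dfa n) t -> W_shape t.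
Proof.
apply: transition_semigroup_ind; last exact: W_shape_comp.
by move=> a; rewrite /W_delta ffunK; apply: W_letter_shape; exact: valP.
Qed.

End Shape.

Section Generation.

Variable m : nat.
Hypothesis m_ge3 : 3 <= m.
Local Notation generated := (dfa_transition_semigroup (W_dfa m.+1)).
Local Notation sink q := (val q = m.+1 - 2 \/ val q = m.+1 - 1).
Implicit Types (q : 'I_m.+1) (t u : {ffun 'I_m.+1 -> 'I_m.+1}) (g : nat -> nat).

Lemma val_inord k : k <= m -> val (inord k : 'I_m.+1) = k.
Proof. exact: inordK. Qed.

Lemma inQM1 : inQM m.+1 1.
Proof. by state_lia. Qed.

(* Every letter of W(n) sends 0 to some [a], Q_M through some [g], and the two
   sink states to m = n-1.  Values are clamped to m, so [a] and [g] only matter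
   below m. *)
Definition zone_trans a g : {ffun 'I_m.+1 -> 'I_m.+1} :=
  locked [ffun q => inord (minn
    (if val q == 0 then a else if inQM m.+1 (val q) then g (val q) else m) m)].

Lemma zone_transE a g q : val (zone_trans a g q) =
  minn (if val q == 0 then a else if inQM m.+1 (val q) then g (val q) else m) m.
Proof. by rewrite /zone_trans -lock ffunE val_inord // geq_minr. Qed.

Lemma zone_trans0 a g q : val q = 0 -> val (zone_trans a g q) = minn a m.
Proof. by move=> q0; rewrite zone_transE q0. Qed.

Lemma zone_transM a g q : inQM m.+1 (val q) -> val (zone_trans a g q) = minn (g (val q)) m.
Proof. by move=> qM; rewrite zone_transE qM ifF //; apply/eqP; state_lia. Qed.

Lemma zone_trans_sink a g q : sink q -> val (zone_trans a g q) = m.+1 - 1.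
Proof. by move=> qs; rewrite zone_transE; case_ifs; state_lia. Qed.

Lemma zone_trans_comp_sink a1 g1 a2 g2 q :
  sink q -> val (zone_trans a2 g2 (zone_trans a1 g1 q)) = m.+1 - 1.
Proof. by move=> qs; apply: zone_trans_sink; right; exact: zone_trans_sink. Qed.

Definition tval t k := val (t (inord k)).

Lemma tvalE t q : tval t (val q) = val (t q).
Proof. by rewrite /tval inord_val. Qed.

Definition b_trans i := zone_trans m (fun k => if k == i then m.-1 else k).
Definition c_trans g := zone_trans m.-1 g.
Definition d_trans p g := zone_trans p g.
Definition d_trans1 p := d_trans p (fun k => if k == 1 then m.-1 else m).

Lemma b_trans_letter i : inQM m.+1 i -> W_letter (b_trans i).
Proof.
move=> iM; apply/or3P/Or31/existsP; exists (inord i); rewrite val_inord; last by state_lia.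
by rewrite iM; apply/forallP => q; rewrite zone_transE; have := ltn_ord q; case_ifs; state_lia.
Qed.

Lemma c_trans_letter g q0 :
  (forall q, inQM m.+1 (val q) -> g (val q) <> 0 /\ g (val q) <> m.-1) ->
  inQM m.+1 (val q0) -> g (val q0) < m -> W_letter (c_trans g).
Proof.
move=> gM q0M gq0; apply/or3P/Or32; rewrite /is_c -!andbA; apply/and4P; split.
- by apply/forallP => q; rewrite zone_transE; case_ifs; state_lia.
- by apply/forallP => q; rewrite zone_transE; case_ifs; state_lia.
- apply/forallP => q; rewrite zone_transE; apply/implyP => qM.
  by have := gM q qM; case_ifs; state_lia.
- by apply/negP => /forallP /(_ q0) /eqP; rewrite zone_transE; case_ifs; state_lia.
Qed.

Lemma c_trans_id_letter : W_letter (c_trans id).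
Proof. by apply: (@c_trans_letter _ (inord 1)) => [q||]; rewrite ?val_inord; state_lia. Qed.

Lemma d_trans_letter p g q0 :
  inQM m.+1 p -> (forall q, inQM m.+1 (val q) -> m.-1 <= g (val q)) ->
  inQM m.+1 (val q0) -> g (val q0) = m.-1 -> W_letter (d_trans p g).
Proof.
move=> pM gM q0M gq0; apply/or3P/Or33; rewrite /is_d -!andbA; apply/and4P; split.
- by apply/forallP => q; rewrite zone_transE; case_ifs; state_lia.
- apply/forallP => q; rewrite zone_transE; apply/implyP => qM.
  by have := gM q qM; case_ifs; state_lia.
- by apply/forallP => q; rewrite zone_transE; case_ifs; state_lia.
- by apply/negP => /existsP [p' /andP [_ /forallP /(_ q0) /eqP]];
    rewrite zone_transE; case_ifs; state_lia.
Qed.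

Lemma d_trans1_letter p : inQM m.+1 p -> W_letter (d_trans1 p).
Proof.
move=> pM; apply: (@d_trans_letter _ _ (inord 1)) => // [q _||]; rewrite ?val_inord;
  case_ifs; state_lia.
Qed.

Lemma eq_trans_by_zones t u :
  val (t ord0) = val (u ord0) ->
  (forall q, inQM m.+1 (val q) -> val (t q) = val (u q)) ->
  (forall q, sink q -> val (t q) = val (u q)) -> t = u.
Proof.
move=> tu0 tuM tus; apply/ffunP => q; apply/val_inj.
case: (state_cases q) => [q0 | qM | qs | qs]; auto.
by have -> : q = ord0 by apply/val_inj.
Qed.

Lemma generated_comp s u : W_letter s -> W_letter u -> generated [ffun q => u (s q)].
Proof. by move=> /W_letter_semigroup Ws /W_letter_semigroup Wu; exact: transition_semigroup_comp. Qed.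

Lemma generated_init_sink_final t q0 :
  W_shape t -> val (t ord0) = m -> inQM m.+1 (val q0) -> val (t q0) = m.-1 -> generated t.
Proof.
move=> [t0 t_sink _] tinit q0M tq0.
pose QM := [set q : 'I_m.+1 | inQM m.+1 (val q)].
have [i iM iNt] : exists2 i, i \in QM & i \notin t @: QM.
  by apply: (@exists_notin_imset _ _ _ q0); rewrite inE //; state_lia.
rewrite inE in iM.
have t_ne_i q : inQM m.+1 (val q) -> val (t q) <> val i.
  by move=> qM /val_inj tqi; move: iNt; rewrite -tqi imset_f // inE.
pose g k := if tval t k == m.-1 then val i else tval t k.
have cg : W_letter (c_trans g).
  apply: (@c_trans_letter g q0) => [q qM|//|]; rewrite /g tvalE.
    by have := t0 q; have := t_ne_i q qM; case_ifs; state_lia.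
  by rewrite tq0 eqxx; state_lia.
suff -> : t = [ffun q => b_trans (val i) (c_trans g q)].
  exact: generated_comp cg (b_trans_letter iM).
apply: eq_trans_by_zones => [|q qM|q qs]; rewrite ffunE; last first.
  by rewrite zone_trans_comp_sink // t_sink.
- rewrite zone_transE (zone_transM _ _ qM) /g tvalE.
  by have := t0 q; have := t_ne_i q qM; have := ltn_ord (t q); case_ifs; state_lia.
- by rewrite zone_transE zone_trans0 // tinit; case_ifs; state_lia.
Qed.

Lemma generated_init_sink_mid t q1 :
  W_shape t -> val (t ord0) = m -> (forall q, inQM m.+1 (val q) -> val (t q) <> m.-1) ->
  inQM m.+1 (val q1) -> val (t q1) < m -> generated t.
Proof.
move=> [t0 t_sink _] tinit tM q1M tq1.
have ct : W_letter (c_trans (tval t)).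
  by apply: (@c_trans_letter _ q1) => [q qM|//|]; rewrite tvalE //; have := t0 q; have := tM q qM.
suff -> : t = [ffun q => c_trans id (c_trans (tval t) q)].
  exact: generated_comp ct c_trans_id_letter.
apply: eq_trans_by_zones => [|q qM|q qs]; rewrite ffunE; last first.
  by rewrite zone_trans_comp_sink // t_sink.
- rewrite zone_transE (zone_transM _ _ qM) tvalE.
  by have := t0 q; have := tM q qM; have := ltn_ord (t q); case_ifs; state_lia.
- by rewrite zone_transE zone_trans0 // tinit; case_ifs; state_lia.
Qed.

Lemma generated_init_sink_const t :
  W_shape t -> val (t ord0) = m -> (forall q, inQM m.+1 (val q) -> m <= val (t q)) ->
  generated t.
Proof.
move=> [_ t_sink _] tinit tM.
suff -> : t = [ffun q => d_trans1 1 (b_trans 1 q)].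
  exact: generated_comp (b_trans_letter inQM1) (d_trans1_letter inQM1).
apply: eq_trans_by_zones => [|q qM|q qs]; rewrite ffunE; last first.
  by rewrite zone_trans_comp_sink // t_sink.
- rewrite zone_transE (zone_transM _ _ qM).
  by have := tM q qM; have := ltn_ord (t q); case_ifs; state_lia.
- by rewrite zone_transE zone_trans0 // tinit; case_ifs; state_lia.
Qed.

Lemma generated_init_final t :
  W_shape t -> val (t ord0) = m.-1 -> (forall q, inQM m.+1 (val q) -> val (t q) <> m.-1) ->
  generated t.
Proof.
move=> [t0 t_sink _] tinit tM.
case: (boolP [exists q, inQM m.+1 (val q) && (val (t q) < m)]).
- case/existsP=> q1 /andP [q1M tq1].
  suff -> : t = c_trans (tval t).
    by apply: W_letter_semigroup; apply: (@c_trans_letter _ q1) => [q qM|//|];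
      rewrite tvalE //; have := t0 q; have := tM q qM.
  apply: eq_trans_by_zones => [|q qM|q qs]; last by rewrite zone_trans_sink // t_sink.
    by rewrite zone_trans0 // tinit; state_lia.
  by rewrite zone_transM // tvalE; have := ltn_ord (t q); state_lia.
- move/existsPn=> tM'.
  suff -> : t = [ffun q => b_trans 1 (d_trans1 1 q)].
    exact: generated_comp (d_trans1_letter inQM1) (b_trans_letter inQM1).
  apply: eq_trans_by_zones => [|q qM|q qs]; rewrite ffunE; last first.
    by rewrite zone_trans_comp_sink // t_sink.
  + rewrite zone_transE (zone_transM _ _ qM).
    by have := tM' q; rewrite qM /= -leqNgt; have := ltn_ord (t q); case_ifs; state_lia.
  + by rewrite zone_transE zone_trans0 // tinit; case_ifs; state_lia.
Qed.

Lemma generated_init_mid t :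
  W_shape t -> inQM m.+1 (val (t ord0)) ->
  (forall q, inQM m.+1 (val q) -> val (t q) = m.-1 \/ val (t q) = m) -> generated t.
Proof.
move=> [_ t_sink _] tinit tM.
case: (boolP [exists q, inQM m.+1 (val q) && (val (t q) == m.-1)]).
- case/existsP=> q1 /andP [q1M /eqP tq1].
  suff -> : t = d_trans (val (t ord0)) (tval t).
    by apply: W_letter_semigroup; apply: (@d_trans_letter _ _ q1) => // [q qM|];
      rewrite tvalE //; have := tM q qM; state_lia.
  apply: eq_trans_by_zones => [|q qM|q qs]; last by rewrite zone_trans_sink // t_sink.
    by rewrite zone_trans0 //; state_lia.
  by rewrite zone_transM // tvalE; have := tM q qM; state_lia.
- move/existsPn=> tM'.
  suff -> : t = [ffun q => c_trans id (d_trans1 (val (t ord0)) q)].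
    exact: generated_comp (d_trans1_letter tinit) c_trans_id_letter.
  apply: eq_trans_by_zones => [|q qM|q qs]; rewrite ffunE; last first.
    by rewrite zone_trans_comp_sink // t_sink.
  + rewrite zone_transE (zone_transM _ _ qM).
    by have := tM' q; rewrite qM /=; have := tM q qM; case_ifs; state_lia.
  + by rewrite zone_transE zone_trans0 //; case_ifs; state_lia.
Qed.

Lemma W_shape_generated t : W_shape t -> generated t.
Proof.
move=> Wt; have [_ _ /(_ ord0 erefl) [tinit | [tinit tM] | [tinit tM]]] := Wt.
- have {}tinit : val (t ord0) = m by state_lia.
  case: (boolP [exists q, inQM m.+1 (val q) && (val (t q) == m.-1)]).
    by case/existsP=> q0 /andP [q0M /eqP]; exact: generated_init_sink_final.
  move/existsPn=> tN.
  have tM q : inQM m.+1 (val q) -> val (t q) <> m.-1.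
    by move=> qM; have := tN q; rewrite qM => /eqP.
  case: (boolP [exists q, inQM m.+1 (val q) && (val (t q) < m)]).
    by case/existsP=> q1 /andP [q1M tq1]; exact: (generated_init_sink_mid Wt tinit tM q1M tq1).
  move/existsPn=> tN'; apply: generated_init_sink_const => // q qM.
  by have := tN' q; rewrite qM -leqNgt.
- apply: generated_init_final => //; first by state_lia.
  by move=> q /tM; state_lia.
- by apply: generated_init_mid => // q /tM; state_lia.
Qed.

End Generation.

Theorem mainTheorem7 (n : nat) (hn : 4 <= n) (t : {ffun 'I_n -> 'I_n}) :
  dfa_transition_semigroup (W_dfa n) t <-> W_bf6 t.
Proof.
have n_ge2 : 2 <= n by apply: leq_trans hn.
split; first by move/(W_semigroup_shape n_ge2)/(W_shape_W_bf6 n_ge2).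
case: n hn t n_ge2 => [//|m] hm t n_ge2 /(W_bf6_W_shape n_ge2).
exact: W_shape_generated.
Qed.
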